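(* Let $(b,c)$ be a weighted graph over $V$ and $m$ a measure on $V$. The following are equivalent: (i) for every $\alpha>0$ there is a nontrivial, nonnegative, bounded function $l$ on $V$ with $(\widetilde L+\alpha)l\le0$; (ii) for some $\alpha>0$ there is a nontrivial, nonnegative, bounded function $l$ on $V$ with $(\widetilde L+\alpha)l\le0$.
   Context: Let $V$ be a countably infinite set. A weighted graph over $V$ is a pair $(b,c)$ of maps $b:V\times V\to[0,\infty)$ and $c:V\to[0,\infty)$ with $b(x,x)=0$, $b(x,y)=b(y,x)$ and $\sum_{y\in V}b(x,y)<\infty$ for all $x,y\in V$. A measure on $V$ is a map $m:V\to(0,\infty)$. For $u$ with $\sum_y b(x,y)|u(y)|<\infty$ for all $x$ (in particular bounded $u$), $\widetilde Lu(x)=\frac1{m(x)}\sum_y b(x,y)(u(x)-u(y))+\frac{c(x)}{m(x)}u(x)$. *)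

From Stdlib Require Import Reals Classical ClassicalEpsilon.
Open Scope R_scope.

Definition enumeration {V : Type} (e : nat -> V) : Prop :=
  (forall n k, e n = e k -> n = k) /\ (forall v, exists n, e n = v).

(* Value of a convergent real series (0 if it does not converge). *)
Definition series_sum (a : nat -> R) : R :=
  match excluded_middle_informative (exists l, infinite_sum a l) with
  | left H => proj1_sig (constructive_indefinite_description _ H)
  | right _ => 0
  end.

(* Sum over V, computed along the enumeration e (for absolutely summable
   families, as used below, the value does not depend on e). *)
Definition vsum {V : Type} (e : nat -> V) (f : V -> R) : R :=
  series_sum (fun n => f (e n)).

Definition weighted_graph {V : Type} (e : nat -> V) (b : V -> V -> R) (c : V -> R) : Prop :=
  (forall x y, 0 <= b x y) /\ (forall x, 0 <= c x) /\
  (forall x, b x x = 0) /\ (forall x y, b x y = b y x) /\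
  (forall x, exists s, infinite_sum (fun n => b x (e n)) s).

Definition measure {V : Type} (m : V -> R) : Prop := forall x, 0 < m x.

Definition Ltilde {V : Type} (e : nat -> V) (b : V -> V -> R) (c m : V -> R)
  (u : V -> R) (x : V) : R :=
  / m x * vsum e (fun y => b x y * (u x - u y)) + c x / m x * u x.

Definition bounded_fun {V : Type} (u : V -> R) : Prop := exists M, forall x, Rabs (u x) <= M.
Definition nonneg_fun {V : Type} (u : V -> R) : Prop := forall x, 0 <= u x.
Definition nontrivial {V : Type} (u : V -> R) : Prop := exists x, u x <> 0.

Definition subsolution {V : Type} (e : nat -> V) (b : V -> V -> R) (c m : V -> R)
  (alpha : R) (l : V -> R) : Prop :=
  forall x, Ltilde e b c m l x + alpha * l x <= 0.

(* If l is a bounded nonnegative subsolution for alpha and beta > alpha, cut l off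
   below the level t = (1 - alpha/beta) sup l: the positive part (l - t)_+ is still
   nontrivial, and where it is positive beta (l - t) <= alpha l, while the graph
   Laplacian part can only decrease under this truncation.  For beta <= alpha, l
   itself works (t = 0). *)
From Stdlib Require Import Reals Lra Classical ClassicalEpsilon.
Open Scope R_scope.

Lemma infinite_sum_scal (a : nat -> R) (s K : R) :
  infinite_sum a s -> infinite_sum (fun n => a n * K) (s * K).
Proof.
  intro Ha.
  apply (Un_cv_ext (fun N => sum_f_R0 a N * K)).
  - intro N; rewrite Rmult_comm, scal_sum; reflexivity.
  - apply (CV_mult _ (fun _ => K)); [exact Ha|].
    intros eps Heps; exists 0%nat; intros n _.
    unfold Rdist; rewrite Rminus_diag, Rabs_R0; exact Heps.
Qed.

Lemma infinite_sum_dominated (a f : nat -> R) (K : R) :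
  (forall n, 0 <= a n) -> (exists s, infinite_sum a s) ->
  (forall n, Rabs (f n) <= K * a n) -> exists s, infinite_sum f s.
Proof.
  intros Ha [s Hs] Hf.
  assert (Habs : {l | Un_cv (sum_f_R0 (fun n => Rabs (f n))) l}).
  { apply (Rseries_CV_comp _ (fun n => a n * K)).
    - intro n; split; [apply Rabs_pos | rewrite Rmult_comm; apply Hf].
    - exists (s * K); exact (infinite_sum_scal _ _ _ Hs). }
  destruct (cv_cauchy_2 _ (cauchy_abs _ (cv_cauchy_1 _ Habs))) as [l Hl].
  exists l; exact Hl.
Qed.

Lemma series_sum_eq (a : nat -> R) (s : R) : infinite_sum a s -> series_sum a = s.
Proof.
  intro Ha; unfold series_sum.
  destruct (excluded_middle_informative _) as [Hex | Hnex].
  - destruct (constructive_indefinite_description _ Hex) as [l Hl]; simpl.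
    exact (uniqueness_sum _ _ _ Hl Ha).
  - exfalso; apply Hnex; exists s; exact Ha.
Qed.

Lemma series_sum_le (a f : nat -> R) :
  (exists s, infinite_sum a s) -> (exists s, infinite_sum f s) ->
  (forall n, a n <= f n) -> series_sum a <= series_sum f.
Proof.
  intros [s Hs] [t Ht] Hle.
  rewrite (series_sum_eq _ _ Hs), (series_sum_eq _ _ Ht).
  exact (Rle_cv_lim (fun N => sum_Rle _ _ N (fun n _ => Hle n)) Hs Ht).
Qed.

Lemma bounded_sup_approx {V : Type} (l : V -> R) (x0 : V) :
  bounded_fun l ->
  exists s, (forall x, l x <= s) /\ (forall t, t < s -> exists x, t < l x).
Proof.
  intros [M HM].
  destruct (completeness (fun r => exists x, r = l x)) as [s [Hub Hleast]].
  - exists M; intros r [x ->]; exact (Rle_trans _ _ _ (Rle_abs _) (HM x)).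
  - exists (l x0), x0; reflexivity.
  - exists s; split; [intro x; apply Hub; exists x; reflexivity|].
    intros t Hts; apply NNPP; intro Hnone.
    enough (s <= t) by lra.
    apply Hleast; intros r [x ->]; apply Rnot_lt_le; intro; apply Hnone; exists x; assumption.
Qed.

Definition truncate {V : Type} (t : R) (l : V -> R) (x : V) : R := Rmax (l x - t) 0.

Lemma truncate_nonneg {V : Type} (t : R) (l : V -> R) : nonneg_fun (truncate t l).
Proof. intro x; apply Rmax_r. Qed.

Lemma truncate_bounded {V : Type} (t : R) (l : V -> R) :
  0 <= t -> nonneg_fun l -> bounded_fun l -> bounded_fun (truncate t l).
Proof.
  intros Ht Hl [M HM]; exists M; intro x.
  specialize (HM x); rewrite Rabs_right in HM by (apply Rle_ge, Hl).
  rewrite Rabs_right by (apply Rle_ge, truncate_nonneg).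
  pose proof (Hl x); unfold truncate; apply Rmax_lub; lra.
Qed.

Section Laplacian.

Variables (V : Type) (e : nat -> V) (b : V -> V -> R) (c m : V -> R).
Hypotheses (Hg : weighted_graph e b c) (Hm : measure m).

Lemma edge_sum_summable (x : V) : exists s, infinite_sum (fun n => b x (e n)) s.
Proof. apply Hg. Qed.

Lemma bounded_diff_summable (u : V -> R) (x : V) :
  bounded_fun u -> exists s, infinite_sum (fun n => b x (e n) * (u x - u (e n))) s.
Proof.
  intros [M HM].
  apply (infinite_sum_dominated (fun n => b x (e n)) _ (2 * M));
    [intro; apply Hg | apply edge_sum_summable |].
  intro n; rewrite Rabs_mult, (Rabs_right (b x (e n))) by (apply Rle_ge, Hg).
  assert (Hdiff : Rabs (u x - u (e n)) <= 2 * M).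
  { unfold Rminus; eapply Rle_trans; [apply Rabs_triang|].
    rewrite Rabs_Ropp; pose proof (HM x); pose proof (HM (e n)); lra. }
  rewrite Rmult_comm; apply Rmult_le_compat_r; [apply Hg | exact Hdiff].
Qed.

Lemma Ltilde_le (u v : V -> R) (x : V) :
  bounded_fun u -> bounded_fun v ->
  (forall y, u x - u y <= v x - v y) -> u x <= v x ->
  Ltilde e b c m u x <= Ltilde e b c m v x.
Proof.
  intros Hu Hv Hdiff Hx; unfold Ltilde, vsum.
  assert (Hmx : 0 < / m x) by apply Rinv_0_lt_compat, Hm.
  assert (Hcm : 0 <= c x / m x) by (apply Rmult_le_pos; [apply Hg | lra]).
  apply Rplus_le_compat; [apply Rmult_le_compat_l; [lra|] | apply Rmult_le_compat_l; auto].
  apply series_sum_le; try apply bounded_diff_summable; try assumption.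
  intro n; apply Rmult_le_compat_l; [apply Hg | apply Hdiff].
Qed.

Lemma Ltilde_nonpos_at_zero (u : V -> R) (x : V) :
  nonneg_fun u -> bounded_fun u -> u x = 0 -> Ltilde e b c m u x <= 0.
Proof.
  intros Hu Hbd Hx; unfold Ltilde, vsum; rewrite Hx, Rmult_0_r, Rplus_0_r.
  destruct (edge_sum_summable x) as [s Hs].
  assert (Hsum : series_sum (fun n => b x (e n) * (0 - u (e n))) <= s * 0).
  { rewrite <- (series_sum_eq _ _ (infinite_sum_scal _ _ 0 Hs)).
    apply series_sum_le; [rewrite <- Hx; apply bounded_diff_summable; assumption
                         | eexists; apply infinite_sum_scal, Hs |].
    intro n; apply Rmult_le_compat_l; [apply Hg | specialize (Hu (e n)); lra]. }
  assert (Hmx : 0 < / m x) by apply Rinv_0_lt_compat, Hm.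
  rewrite Rmult_0_r in Hsum; nra.
Qed.

Lemma subsolution_truncate (alpha beta s t : R) (l : V -> R) :
  0 <= beta -> 0 <= t -> (beta - alpha) * s <= beta * t ->
  nonneg_fun l -> bounded_fun l -> (forall x, l x <= s) ->
  subsolution e b c m alpha l -> subsolution e b c m beta (truncate t l).
Proof.
  intros Hbeta Ht Hst Hl Hbd Hls Hsub x.
  pose proof (truncate_bounded t l Ht Hl Hbd) as Hbd'.
  destruct (Rle_dec (l x) t) as [Hlow | Hhigh].
  - assert (Hzero : truncate t l x = 0) by (unfold truncate; apply Rmax_right; lra).
    rewrite Hzero, Rmult_0_r, Rplus_0_r.
    exact (Ltilde_nonpos_at_zero _ _ (truncate_nonneg t l) Hbd' Hzero).
  - assert (Hpos : truncate t l x = l x - t) by (unfold truncate; apply Rmax_left; lra).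
    assert (HL : Ltilde e b c m (truncate t l) x <= Ltilde e b c m l x).
    { apply Ltilde_le; [exact Hbd' | exact Hbd | | rewrite Hpos; lra].
      intro y; rewrite Hpos; pose proof (Rmax_l (l y - t) 0); unfold truncate; lra. }
    assert (Hlevel : (beta - alpha) * l x <= beta * t).
    { destruct (Rle_dec alpha beta).
      - pose proof (Hls x); nra.
      - pose proof (Hl x); nra. }
    specialize (Hsub x); rewrite Hpos; lra.
Qed.

End Laplacian.

Theorem mainTheorem17 (V : Type) (e : nat -> V) (b : V -> V -> R) (c m : V -> R)
  (He : enumeration e) (Hg : weighted_graph e b c) (Hm : measure m) :
  (forall alpha, 0 < alpha ->
     exists l : V -> R, nontrivial l /\ nonneg_fun l /\ bounded_fun l /\ subsolution e b c m alpha l)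
  <->
  (exists alpha, 0 < alpha /\
     exists l : V -> R, nontrivial l /\ nonneg_fun l /\ bounded_fun l /\ subsolution e b c m alpha l).
Proof.
  split; [intro Hall; exists 1; split; [lra | apply Hall; lra] |].
  intros [alpha [Halpha [l [[x0 Hx0] [Hl [Hbd Hsub]]]]]] beta Hbeta.
  destruct (bounded_sup_approx l x0 Hbd) as [s [Hls Happrox]].
  assert (Hs : 0 < s) by (pose proof (Hl x0); pose proof (Hls x0); lra).
  set (t := Rmax 0 ((beta - alpha) / beta * s)).
  assert (Ht : 0 <= t) by apply Rmax_l.
  assert (Hts : t < s).
  { apply Rmax_lub_lt; [exact Hs|].
    apply (Rmult_lt_reg_l beta); [exact Hbeta|]; field_simplify; nra. }
  assert (Hst : (beta - alpha) * s <= beta * t).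
  { apply (Rle_trans _ (beta * ((beta - alpha) / beta * s))); [right; field; lra|].
    apply Rmult_le_compat_l; [lra | apply Rmax_r]. }
  destruct (Happrox t Hts) as [x1 Hx1].
  exists (truncate t l); repeat split.
  - exists x1; unfold truncate; rewrite Rmax_left; lra.
  - apply truncate_nonneg.
  - exact (truncate_bounded t l Ht Hl Hbd).
  - exact (subsolution_truncate V e b c m Hg Hm alpha beta s t l
             (Rlt_le _ _ Hbeta) Ht Hst Hl Hbd Hls Hsub).
Qed.
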